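(* Let $\mathcal{H}$ be a PICOD hypergraph with $n\ge1$ clients having request-sets $R_1,\dots,R_n$. Then $\beta(\mathcal{H})=1$ if and only if there exist indices $d_1\in R_1,\dots,d_n\in R_n$ such that the set $\{d_1,\dots,d_n\}$ is an independent set of $\mathcal{H}$.
   Context: PICOD problem: a server holds $m$ messages $b_1,\dots,b_m\in\mathbb{F}_q$; there are $n$ clients, client $i$ having side-information $\{b_j: j\in S_i\}$, $S_i\subseteq[m]$, and request-set $R_i=[m]\setminus S_i$ (assumed non-empty); client $i$ wants any one message $b_j$ with $j\in R_i$. A PICOD scheme of length $\ell$ over $\mathbb{F}_q$ is an encoding map $\phi:\mathbb{F}_q^m\to\mathbb{F}_q^\ell$ such that for every client $i$ there is an index $j_i\in R_i$ and a function $\psi_i$ with $\psi_i(\phi(b),(b_k)_{k\in S_i})=b_{j_i}$ for all $b\in\mathbb{F}_q^m$. The PICOD hypergraph $\mathcal{H}$ has vertex set $[m]$ and edge set $\{R_i:i\in[n]\}$. $\beta_q(\mathcal{H})$ is the minimum length of a PICOD scheme over $\mathbb{F}_q$, and $\beta(\mathcal{H})=\min_q\beta_q(\mathcal{H})$ over all prime powers $q$. An independent set of $\mathcal{H}$ is a set of vertices no two of which lie in a common edge. *)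

From HB Require Import structures.
From mathcomp Require Import all_boot all_order all_algebra all_field.
Set Implicit Arguments. Unset Strict Implicit. Unset Printing Implicit Defensive.
Import GRing.Theory.
Local Open Scope ring_scope.

(* A PICOD instance: m messages indexed by 'I_m, n clients indexed by 'I_n,
   client i has request-set R i; its side-information set is ~: R i. *)

Definition side_info (F : finFieldType) (m n : nat) (R : 'I_n -> {set 'I_m})
  (i : 'I_n) (b : {ffun 'I_m -> F}) : {ffun 'I_m -> F} :=
  [ffun k => if k \in R i then 0 else b k].

Definition picod_scheme (F : finFieldType) (m n : nat) (R : 'I_n -> {set 'I_m})
  (ell : nat) (phi : {ffun 'I_m -> F} -> {ffun 'I_ell -> F}) : Prop :=
  forall i : 'I_n, exists2 j : 'I_m, j \in R i &
    exists psi : {ffun 'I_ell -> F} -> {ffun 'I_m -> F} -> F,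
      forall b : {ffun 'I_m -> F}, psi (phi b) (side_info R i b) = b j.

Definition has_picod_scheme (m n : nat) (R : 'I_n -> {set 'I_m}) (ell : nat) : Prop :=
  exists (F : finFieldType) (phi : {ffun 'I_m -> F} -> {ffun 'I_ell -> F}),
    picod_scheme R phi.

(* beta(H) = min_q beta_q(H) = 1, written out: length 1 is achievable
   over some field, length 0 over none. *)
Definition beta_eq1 (m n : nat) (R : 'I_n -> {set 'I_m}) : Prop :=
  has_picod_scheme R 1 /\ ~ has_picod_scheme R 0.

Definition independent (m n : nat) (R : 'I_n -> {set 'I_m}) (D : {set 'I_m}) : Prop :=
  forall x y, x \in D -> y \in D -> x != y -> forall i, ~ (x \in R i /\ y \in R i).

From mathcomp Require Import all_boot all_order all_algebra all_field.
Set Implicit Arguments. Unset Strict Implicit. Unset Printing Implicit Defensive.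
Import GRing.Theory.
Local Open Scope ring_scope.

(* If client i decodes z, then, with its side information fixed, the code
   word must change whenever b z does, so c |-> phi (b with z := c) is
   injective.  For a code of length 1 over F this map F -> F^1 is also onto,
   so every code word is already reached by varying b z alone: any other
   requested y of client i cannot influence the code word, and a client
   decoding y is impossible.  Hence the decoded indices form an independent
   set.  Conversely, for an independent set D meeting every request set, the
   single symbol sum_(k in D) b_k is decodable by every client, while a code
   of length 0 carries no information at all. *)

Section PicodCodes.

Variables (F : finFieldType) (m n : nat) (R : 'I_n -> {set 'I_m}).

Definition set_coord (b : {ffun 'I_m -> F}) (k : 'I_m) (c : F) : {ffun 'I_m -> F} :=
  [ffun t => if t == k then c else b t].

Lemma set_coord_eq (b : {ffun 'I_m -> F}) k c : set_coord b k c k = c.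
Proof. by rewrite ffunE eqxx. Qed.

Lemma set_coord_neq (b : {ffun 'I_m -> F}) k c t : t != k -> set_coord b k c t = b t.
Proof. by rewrite ffunE => /negbTE ->. Qed.

Lemma set_coord_id (b : {ffun 'I_m -> F}) k : set_coord b k (b k) = b.
Proof. by apply/ffunP=> t; rewrite ffunE; case: eqP => // ->. Qed.

Lemma side_info_set_coord i (b : {ffun 'I_m -> F}) k c :
  k \in R i -> side_info R i (set_coord b k c) = side_info R i b.
Proof.
move=> kR; apply/ffunP=> t; rewrite !ffunE.
by case: ifP => // tR; case: eqP => // Etk; rewrite Etk kR in tR.
Qed.

Definition decodes ell
    (phi : {ffun 'I_m -> F} -> {ffun 'I_ell -> F}) i j :=
  exists psi : {ffun 'I_ell -> F} -> {ffun 'I_m -> F} -> F,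
    forall b, psi (phi b) (side_info R i b) = b j.

Lemma decodes_set_coord_inj ell (phi : {ffun 'I_m -> F} -> {ffun 'I_ell -> F}) i z
    (b : {ffun 'I_m -> F}) :
  z \in R i -> decodes phi i z -> injective (fun c => phi (set_coord b z c)).
Proof.
move=> zR [psi Hpsi] c1 c2 /= E.
by rewrite -(set_coord_eq b z c1) -Hpsi E side_info_set_coord // -[RHS](set_coord_eq b z c2)
  -(Hpsi (set_coord b z c2)) side_info_set_coord.
Qed.

Lemma decodes_sensitive ell (phi : {ffun 'I_m -> F} -> {ffun 'I_ell -> F}) i z
    (b : {ffun 'I_m -> F}) c :
  z \in R i -> decodes phi i z -> c != b z -> phi (set_coord b z c) != phi b.
Proof.
move=> zR dec_z; apply: contra => /eqP E; apply/eqP.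
by apply: (decodes_set_coord_inj (b := b) zR dec_z); rewrite /= set_coord_id.
Qed.

Lemma decodes1_insensitive (phi : {ffun 'I_m -> F} -> {ffun 'I_1 -> F}) i y z
    (b : {ffun 'I_m -> F}) c :
  z \in R i -> decodes phi i z -> y \in R i -> y != z ->
  phi (set_coord b y c) = phi b.
Proof.
move=> zR dec_z yR yz.
have inj_z := decodes_set_coord_inj (b := b) zR dec_z.
have /codomP[c' Ec'] : phi (set_coord b y c) \in codom (fun c => phi (set_coord b z c)).
  by apply: (inj_card_onto inj_z); rewrite card_ffun card_ord expn1.
suff c'E : c' = b z by rewrite Ec' c'E set_coord_id.
case: dec_z => psi Hpsi.
have := Hpsi (set_coord b y c).
rewrite Ec' side_info_set_coord // -(side_info_set_coord b c' zR) Hpsi.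
by rewrite set_coord_eq set_coord_neq // eq_sym.
Qed.

Lemma decodes1_conflict (phi : {ffun 'I_m -> F} -> {ffun 'I_1 -> F}) a i y z :
  y \in R a -> decodes phi a y -> z \in R i -> decodes phi i z -> y \in R i -> y = z.
Proof.
move=> yRa dec_y zRi dec_z yRi; apply/eqP/negPn/negP => yz.
have := decodes_sensitive (b := 0) (c := 1) yRa dec_y.
by rewrite (decodes1_insensitive _ _ zRi dec_z yRi yz) eqxx ffunE oner_neq0 => /(_ isT).
Qed.

Lemma picod_scheme1_independent (phi : {ffun 'I_m -> F} -> {ffun 'I_1 -> F}) :
  picod_scheme R phi ->
  exists d : 'I_n -> 'I_m, (forall i, d i \in R i) /\ independent R [set d i | i : 'I_n].
Proof.
move=> /fin_all_exists2[d dR dec]; exists d; split=> // _ _ /imsetP[a _ ->] /imsetP[a' _ ->].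
move=> neq i [daR da'R].
rewrite (decodes1_conflict (dR a) (dec a) (dR i) (dec i) daR) in neq.
by rewrite (decodes1_conflict (dR a') (dec a') (dR i) (dec i) da'R) eqxx in neq.
Qed.

Lemma no_picod_scheme0 (phi : {ffun 'I_m -> F} -> {ffun 'I_0 -> F}) :
  (0 < n)%N -> ~ picod_scheme R phi.
Proof.
move=> n_gt0 /(_ (Ordinal n_gt0))[j jR dec_j].
have codes_eq : phi (set_coord 0 j 0) = phi (set_coord 0 j 1) by apply/ffunP => -[].
by have /eqP := decodes_set_coord_inj jR dec_j codes_eq; rewrite eq_sym oner_eq0.
Qed.

Definition sum_code (D : {set 'I_m}) (b : {ffun 'I_m -> F}) : {ffun 'I_1 -> F} :=
  [ffun _ => \sum_(k in D) b k].

Lemma sum_code_picod_scheme (D : {set 'I_m}) :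
  independent R D -> (forall i, exists2 k, k \in D & k \in R i) ->
  picod_scheme R (sum_code D).
Proof.
move=> indD meetD i; have [j jD jR] := meetD i; exists j => //.
exists (fun v s => v ord0 - \sum_(k in D | k != j) s k) => b.
have side_eq : \sum_(k in D | k != j) side_info R i b k = \sum_(k in D | k != j) b k.
  apply: eq_bigr => k /andP[kD kj]; rewrite ffunE; case: ifP => // kR.
  by case: (indD k j kD jD kj i).
by rewrite ffunE (bigD1 j) //= side_eq addrK.
Qed.

End PicodCodes.

Theorem lemma3 (m n : nat) (R : 'I_n -> {set 'I_m})
  (Hn : (0 < n)%N) (HR : forall i, R i != set0) :
  beta_eq1 R <->
  exists d : 'I_n -> 'I_m, (forall i, d i \in R i) /\ independent R [set d i | i : 'I_n].
Proof.
split=> [[[F [phi scheme]] _] | [d [dR indD]]].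
  exact: picod_scheme1_independent scheme.
split; last by case=> F [phi]; apply: no_picod_scheme0.
exists 'F_2%type, (sum_code [set d i | i : 'I_n]).
by apply: sum_code_picod_scheme => // i; exists (d i); rewrite ?imset_f.
Qed.
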